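(* Let $L$ be a list of sets, $F_t$, $F_c$, $F'$ families, $w$ a function from elements to $\mathbb{N}$ and $X$ a set. Suppose (i) $\mathrm{ssn\_aux}(L,F_t,F_c,w,X)=\mathrm{false}$; (ii) $\mathrm{ss}(A,w,X)<0$ for every entry $A$ of $L$; (iii) every $A\in F'\setminus F_t$ with $\mathrm{ss}(A,w,X)<0$ is an entry of $L$; (iv) $F_t\subseteq F'$; (v) $F'$ is union closed for $F_c$. Then $\mathrm{fs}(F',w,X)\ge 0$.
   Context: All sets and families are finite. A family $F$ is union closed if $A\cup B\in F$ for all $A,B\in F$; it is union closed for $F_c$ if it is union closed and $A\cup B\in F$ for all $A\in F$, $B\in F_c$. $\mathrm{sw}(w,A)=\sum_{a\in A}w(a)$; $\mathrm{ss}(A,w,X)=2\,\mathrm{sw}(w,A)-\mathrm{sw}(w,X)\in\mathbb{Z}$; $\mathrm{fs}(F,w,X)=\sum_{A\in F}\mathrm{ss}(A,w,X)$. For a family $G$ and a set $h$, $\mathrm{ica}_{G}(h,F) = F\cup\{h\}\cup\{h\cup B: B\in F\}\cup\{h\cup B: B\in G\}$. The function $\mathrm{ssn\_aux}(L,F_t,G,w,X)$ (boolean valued) is defined by recursion on the list $L$: $\mathrm{ssn\_aux}([\,],F_t,G,w,X) = (\mathrm{fs}(F_t,w,X)<0)$; and for $L = h\#t$: if $\mathrm{fs}(F_t,w,X)+\sum_{A \in h\#t}\mathrm{ss}(A,w,X)\ge 0$ (sum over list entries) then false; else if $\mathrm{ssn\_aux}(t,F_t,G,w,X)$ then true; else if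 $h\in F_t$ then false; else $\mathrm{ssn\_aux}(t,\mathrm{ica}_G(h,F_t),G,w,X)$. *)

From HB Require Import structures.
From mathcomp Require Import all_boot all_order all_algebra.
Set Implicit Arguments. Unset Strict Implicit. Unset Printing Implicit Defensive.
Import Order.TTheory GRing.Theory Num.Theory.
Local Open Scope ring_scope.

Section Defs.
Variable T : finType.

Definition sw (w : T -> nat) (A : {set T}) : nat := (\sum_(a in A) w a)%N.

Definition ss (A : {set T}) (w : T -> nat) (X : {set T}) : int :=
  (2 * sw w A)%N%:Z - (sw w X)%:Z.

Definition fs (F : {set {set T}}) (w : T -> nat) (X : {set T}) : int :=
  \sum_(A in F) ss A w X.

Definition union_closed (F : {set {set T}}) : Prop :=
  forall A B, A \in F -> B \in F -> A :|: B \in F.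

Definition union_closed_for (F Fc : {set {set T}}) : Prop :=
  union_closed F /\ (forall A B, A \in F -> B \in Fc -> A :|: B \in F).

Definition ica (G : {set {set T}}) (h : {set T}) (F : {set {set T}})
  : {set {set T}} :=
  F :|: [set h] :|: [set h :|: B | B in F] :|: [set h :|: B | B in G].

Fixpoint ssn_aux (L : seq {set T}) (Ft G : {set {set T}}) (w : T -> nat)
  (X : {set T}) : bool :=
  match L with
  | [::] => fs Ft w X < 0
  | h :: t =>
      if 0 <= fs Ft w X + \sum_(A <- h :: t) ss A w X then false
      else if ssn_aux t Ft G w X then true
      else if h \in Ft then false
      else ssn_aux t (ica G h Ft) G w X
  end.

End Defs.

From HB Require Import structures.
From mathcomp Require Import all_boot all_order all_algebra.
Import Order.TTheory GRing.Theory Num.Theory.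
Local Open Scope ring_scope.

(* Call a list L a "negative cover" of F' over Ft when every
   member of F' outside Ft with negative ss occurs in L.  If moreover all
   entries of L have negative ss, then fs(Ft) + sum_L ss is a LOWER bound
   for fs(F'): the members of F' \ Ft with negative ss contribute at least
   the (negative) sum over L, and the others contribute nonnegatively.
   The theorem follows by induction on L, following the recursion of
   ssn_aux: either the threshold test fs(Ft) + sum_L ss >= 0 fires, and the
   lower bound gives fs(F') >= 0, or the recursion drops the head h and
   continues with Ft itself or with ica(h, Ft).  In each of those branches
   the tail of L is again a negative cover, over a family still contained
   in F' (for ica this uses that F' is union closed for Fc). *)

Lemma sum_neg_seq_le (I : finType) (R : numDomainType) (f : I -> R)
    (L : seq I) (S : {set I}) :
  (forall i, i \in L -> f i < 0) -> {subset S <= L} ->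
  \sum_(i <- L) f i <= \sum_(i in S) f i.
Proof.
elim: L S => [|h t IH] S neg_f sub_S.
  have -> : S = set0 by apply/setP => i; rewrite inE; apply/negP => /sub_S.
  by rewrite big_nil big_set0.
have neg_t : forall i, i \in t -> f i < 0.
  by move=> i it; apply: neg_f; rewrite inE it orbT.
have neg_h : f h < 0 by apply: neg_f; rewrite inE eqxx.
rewrite big_cons; case: (boolP (h \in S)) => hS.
  rewrite (big_setD1 h hS) lerD2l; apply: IH => // i.
  by rewrite !inE => /andP [ih /sub_S]; rewrite inE (negbTE ih).
apply: le_trans (IH S neg_t _); first by rewrite gerDr ltW.
move=> i iS; move: (sub_S i iS); rewrite inE => /orP [/eqP ih|//].
by rewrite -ih iS in hS.
Qed.

Section NegativeCover.
Set Implicit Arguments.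
Variables (T : finType) (w : T -> nat) (X : {set T}).

Definition neg_cover (L : seq {set T}) (Ft F' : {set {set T}}) : Prop :=
  forall A, A \in F' -> A \notin Ft -> ss A w X < 0 -> A \in L.

Lemma fs_cover_lower_bound (L : seq {set T}) (Ft F' : {set {set T}}) :
  Ft \subset F' -> (forall A, A \in L -> ss A w X < 0) ->
  neg_cover L Ft F' ->
  fs Ft w X + \sum_(A <- L) ss A w X <= fs F' w X.
Proof.
move=> sub neg_L cover.
rewrite /fs [X in _ <= X](big_setID Ft) /= (setIidPr sub) lerD2l.
rewrite [X in _ <= X](big_setID [set A | ss A w X < 0]) /=.
have neg_part : \sum_(A <- L) ss A w X <=
    \sum_(A in (F' :\: Ft) :&: [set A | ss A w X < 0]) ss A w X.
  apply: sum_neg_seq_le => // A; rewrite !inE => /andP [/andP [AF AFt] An].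
  exact: cover.
apply: le_trans neg_part _; rewrite lerDl sumr_ge0 // => A.
by rewrite !inE => /andP [An _]; rewrite leNgt.
Qed.

Lemma neg_cover_tail (h : {set T}) (t : seq {set T}) (Ft G F' : {set {set T}}) :
  Ft \subset G -> (h \in G) || (h \notin F') ->
  neg_cover (h :: t) Ft F' -> neg_cover t G F'.
Proof.
move=> sub_G h_out cover A AF AG An.
have AFt : A \notin Ft by apply: contra AG; apply: (subsetP sub_G).
move: (cover A AF AFt An); rewrite inE => /orP [/eqP Ah|//].
by move: h_out; rewrite -Ah (negbTE AG) AF.
Qed.

End NegativeCover.

Lemma ica_subset (T : finType) (G F : {set {set T}}) (h : {set T}) :
  F \subset ica G h F.
Proof. by apply/subsetP => A AF; rewrite /ica !inE AF. Qed.

Lemma ica_head (T : finType) (G F : {set {set T}}) (h : {set T}) :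
  h \in ica G h F.
Proof. by rewrite /ica !inE eqxx orbT. Qed.

Lemma ica_sub_closed (T : finType) (G F F' : {set {set T}}) (h : {set T}) :
  union_closed_for F' G -> F \subset F' -> h \in F' -> ica G h F \subset F'.
Proof.
move=> [uc ucG] sub hF'; apply/subsetP => A.
rewrite /ica !inE => /orP [/orP [/orP [AF|/eqP ->]|]|] //.
- exact: (subsetP sub).
- by case/imsetP => B BF ->; apply: uc => //; apply: (subsetP sub).
- by case/imsetP => B BG ->; apply: ucG.
Qed.

Theorem lemma5 (T : finType) (L : seq {set T}) (Ft Fc F' : {set {set T}})
  (w : T -> nat) (X : {set T}) :
  ssn_aux L Ft Fc w X = false ->
  (forall A, A \in L -> ss A w X < 0) ->
  (forall A, A \in F' -> A \notin Ft -> ss A w X < 0 -> A \in L) ->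
  Ft \subset F' ->
  union_closed_for F' Fc ->
  0 <= fs F' w X.
Proof.
move=> + + + + closed; elim: L Ft => [|h t IH] Ft /= ssn neg_L cover sub.
  have := fs_cover_lower_bound sub neg_L cover.
  by rewrite big_nil addr0; apply: le_trans; rewrite leNgt ssn.
have neg_t : forall A, A \in t -> ss A w X < 0.
  by move=> A At; apply: neg_L; rewrite inE At orbT.
case: ifP ssn => [threshold _|_].
  exact: le_trans threshold (fs_cover_lower_bound sub neg_L cover).
case: ifP => // ssn_t; case: ifP => [hFt _|_ ssn_ica].
  apply: (IH Ft) => //; apply: (neg_cover_tail (subxx Ft) _ cover).
  by rewrite hFt.
case: (boolP (h \in F')) => hF'; last first.
  apply: (IH Ft) => //; apply: (neg_cover_tail (subxx Ft) _ cover).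
  by rewrite hF' orbT.
apply: (IH (ica Fc h Ft)) => //; last exact: ica_sub_closed.
by apply: (neg_cover_tail (ica_subset _ _ _) _ cover); rewrite ica_head.
Qed.
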